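(* Let $G=(V,E)$ be a finite connected graph with $n$ vertices and edges $e_1,\dots,e_m$, each edge given an orientation, and let $h=m-n+1$. Let $\partial:\mathbb{R}^E\to\mathbb{R}^V$ be the boundary map $e\mapsto \partial^+(e)-\partial^-(e)$ (head minus tail), so that $H_1(G,\mathbb{Z})=\ker(\partial)\cap\mathbb{Z}^E$ is free of rank $h$. Fix a $\mathbb{Z}$-basis $\gamma_1,\dots,\gamma_h$ of $H_1(G,\mathbb{Z})$ and let $M$ be the $h\times m$ real matrix whose $i$-th row is the coordinate vector of $\gamma_i$ in the standard basis $e_1,\dots,e_m$ of $\mathbb{R}^E$. Let $\mathbf{p}\in\mathbb{R}^V$ be a nonzero vector whose coordinates sum to $0$, let $\omega\in\mathbb{R}^E$ with $\partial(\omega)=\mathbf{p}$, and let $N$ be the $(h+1)\times m$ matrix whose rows are the coordinate vectors of $\gamma_1,\dots,\gamma_h,\omega$. Let $U$ be a topological space, $y_1,\dots,y_m:U\to\mathbb{R}_{>0}$ continuous functions, and $Y=\mathrm{diag}(y_1,\dots,y_m)$. Let $A:U\to\mathrm{Mat}_{m\times m}(\mathbb{R})$ be a map such that (i) there is $C>0$ with all entries of $A(s)$ in $[-C,C]$ for all $s\in U$, and (ii) the matrices $M(Y+A)M^\tau$ and $N(Y+A)N^\tau$ are invertible at every point of $U$. Then $$\frac{\det(N(Y+A)N^\tau)}{\det(M(Y+A)M^\tau)}-\frac{\det(NYN^\tau)}{\det(MYM^\tau)}=O_{\underline y}(1).$$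
   Context: Notation: for real functions $F_1,F_2$ on $U$, $F_1=O_{\underline y}(F_2)$ means there exist constants $c,C'>0$ such that $|F_1(s)|\le c|F_2(s)|$ for all $s\in U$ with $y_1(s),\dots,y_m(s)\ge C'$. All matrices are evaluated pointwise at $s\in U$; $X^\tau$ denotes the transpose. *)

From HB Require Import structures.
From mathcomp Require Import all_boot all_order all_algebra.
From mathcomp Require Import all_classical all_reals all_analysis.
Set Implicit Arguments. Unset Strict Implicit. Unset Printing Implicit Defensive.
Import Order.TTheory GRing.Theory Num.Theory.
Local Open Scope ring_scope.

(* An oriented (multi)graph with vertex set 'I_n and edge set 'I_m:
   edge e goes from tail (tl e) to head (hd e). *)

(* Matrix of the boundary map R^E -> R^V acting on row vectors:
   (x *m bdmx hd tl) v = sum_e x_e ([hd e = v] - [tl e = v]). *)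
Definition bdmx (R : nzRingType) (n m : nat) (hd tl : 'I_m -> 'I_n)
  : 'M[R]_(m, n) :=
  \matrix_(e < m, v < n) ((hd e == v)%:R - (tl e == v)%:R).

Definition adj (n m : nat) (hd tl : 'I_m -> 'I_n) : rel 'I_n :=
  fun u v => [exists e, ((hd e == u) && (tl e == v))
                        || ((tl e == u) && (hd e == v))].

Definition connected_graph (n m : nat) (hd tl : 'I_m -> 'I_n) : Prop :=
  forall u v : 'I_n, connect (adj hd tl) u v.

Definition is_H1_Zbasis (n m h : nat) (hd tl : 'I_m -> 'I_n)
  (g : 'M[int]_(h, m)) : Prop :=
  g *m bdmx int hd tl = 0 /\
  forall x : 'rV[int]_m, x *m bdmx int hd tl = 0 ->
    exists! c : 'rV[int]_h, x = c *m g.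

Definition cycmx (R : nzRingType) (h m : nat) (g : 'M[int]_(h, m))
  : 'M[R]_(h, m) := map_mx (fun z : int => z%:~R) g.

Definition Nmx (R : nzRingType) (h m : nat) (g : 'M[int]_(h, m))
  (w : 'rV[R]_m) : 'M[R]_(h + 1, m) := col_mx (cycmx R g) w.

Definition Ymx (R : nzRingType) (U : Type) (m : nat) (y : 'I_m -> U -> R)
  (s : U) : 'M[R]_m := diag_mx (\row_i y i s).

From HB Require Import structures.
From mathcomp Require Import all_boot all_order all_algebra.
From mathcomp Require Import all_classical all_reals all_analysis.
From mathcomp Require Import ring lra.
Import Order.TTheory GRing.Theory Num.Theory numFieldNormedType.Exports.
Local Open Scope ring_scope.
Set Implicit Arguments. Unset Strict Implicit. Unset Printing Implicit Defensive.

(* Write u := w + c M with c chosen so that u Y M^T = 0.  A unipotent change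
   of rows turns N into [M; u], so by the Schur complement
   det (N X N^T) / det (M X M^T) = u X u^T - u X M^T (M X M^T)^-1 M X u^T.
   For X = Y this is u Y u^T, hence the difference of the two ratios is
   u A u^T - (u A M^T) (M (Y + A) M^T)^-1 (M A u^T).
   The vector u is the current with boundary p through the resistances y:
   u Y M^T = 0 is Kirchhoff's voltage law.  Such a current never flows around
   a cycle, so the vertices reachable from the head of an edge e along the
   current form a cut that e enters and that no current leaves; hence
   |u_e| <= sum_v |p_v| uniformly in y.
   For the inverse, once y >= C m + 1 the form z (Y + A) z^T dominates
   sum_e z_e^2.  For z = r M with r = (u A M^T) (M (Y + A) M^T)^-1 this bounds
   sum_e z_e^2 linearly in sum_e |z_e|, hence bounds z, and r = z P for a right
   inverse P of M. *)

Lemma det_block_schur (F : fieldType) k l (P : 'M[F]_k) (Q : 'M[F]_(k, l))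
    (S : 'M[F]_(l, k)) (D : 'M[F]_l) :
  P \in unitmx -> \det (block_mx P Q S D) = \det P * \det (D - S *m invmx P *m Q).
Proof.
move=> uP.
have -> : block_mx P Q S D = block_mx 1%:M 0 (S *m invmx P) 1%:M
    *m block_mx P Q 0 (D - S *m invmx P *m Q).
  rewrite mulmx_block !mul1mx !mul0mx !addr0.
  by rewrite -mulmxA mulVmx // mulmx1 addrC subrK.
by rewrite det_mulmx det_lblock det_ublock !det1 !mul1r.
Qed.

Lemma det_col_mx_ratio (F : fieldType) h m (M : 'M[F]_(h, m)) (w u : 'rV[F]_m)
    (c : 'rV[F]_h) (X : 'M[F]_m) :
  u = w + c *m M -> M *m X *m M^T \in unitmx ->
  \det (col_mx M w *m X *m (col_mx M w)^T) / \det (M *m X *m M^T)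
  = (u *m X *m u^T
     - u *m X *m M^T *m invmx (M *m X *m M^T) *m (M *m X *m u^T)) 0 0.
Proof.
move=> -> uG.
have -> : col_mx M w = block_mx 1%:M 0 (- c) 1%:M *m col_mx M (w + c *m M).
  by rewrite mul_block_col !mul1mx mul0mx addr0 mulNmx addrCA addNr addr0.
rewrite trmx_mul !mulmxA det_mulmx -!mulmxA det_mulmx det_tr det_lblock.
rewrite !det1 !mul1r mulr1 !mulmxA tr_col_mx mul_col_mx mul_col_row.
rewrite det_block_schur // det_mx11 mulrC mulKf; last by rewrite -unitfE -unitmxE.
by rewrite !mulmxA.
Qed.

Lemma det_ratio_sub (F : fieldType) h m (M : 'M[F]_(h, m)) (w u : 'rV[F]_m)
    (c : 'rV[F]_h) (Y A : 'M[F]_m) :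
  u = w + c *m M -> Y^T = Y -> u *m Y *m M^T = 0 ->
  M *m Y *m M^T \in unitmx -> M *m (Y + A) *m M^T \in unitmx ->
  \det (col_mx M w *m (Y + A) *m (col_mx M w)^T) / \det (M *m (Y + A) *m M^T)
  - \det (col_mx M w *m Y *m (col_mx M w)^T) / \det (M *m Y *m M^T)
  = (u *m A *m u^T
     - u *m A *m M^T *m invmx (M *m (Y + A) *m M^T) *m (M *m A *m u^T)) 0 0.
Proof.
move=> Hu Ysym uYM uY uX.
have MYu : M *m Y *m u^T = 0.
  by move/(congr1 trmx): uYM; rewrite !trmx_mul trmxK Ysym trmx0 mulmxA.
rewrite (det_col_mx_ratio Hu uX) (det_col_mx_ratio Hu uY) uYM !mul0mx subr0.
set G := invmx _.
rewrite !(mulmxDr, mulmxDl) uYM MYu !(mul0mx, mulmx0, add0r) !mxE; ring.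
Qed.

Lemma exists_orth_shift (F : fieldType) h m (M : 'M[F]_(h, m)) (Y : 'M[F]_m)
    (w : 'rV[F]_m) :
  M *m Y *m M^T \in unitmx -> exists c : 'rV[F]_h, (w + c *m M) *m Y *m M^T = 0.
Proof.
set G := M *m Y *m M^T => uG; exists (- (w *m Y *m M^T *m invmx G)).
rewrite !mulmxDl.
have -> : forall x : 'rV_h, x *m M *m Y *m M^T = x *m G by move=> x; rewrite /G !mulmxA.
by rewrite mulNmx mulmxKV // subrr.
Qed.

Lemma bdmx_delta (R : nzRingType) n m (hd tl : 'I_m -> 'I_n) f :
  (delta_mx 0 f : 'rV[R]_m) *m bdmx R hd tl = delta_mx 0 (hd f) - delta_mx 0 (tl f).
Proof.
by rewrite -rowE; apply/rowP => v; rewrite !mxE ![_ == hd f]eq_sym ![_ == tl f]eq_sym.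
Qed.

Lemma bdmx_sum_pred (R : comNzRingType) n m (hd tl : 'I_m -> 'I_n) (u : 'rV[R]_m)
    (S : pred 'I_n) :
  \sum_v (S v)%:R * (u *m bdmx R hd tl) 0 v
  = \sum_f u 0 f * ((S (hd f))%:R - (S (tl f))%:R).
Proof.
under eq_bigr do rewrite mxE big_distrr.
rewrite exchange_big; apply: eq_bigr => f _ /=.
under eq_bigr do rewrite mulrCA.
rewrite -big_distrr /=; congr (_ * _).
under eq_bigr do rewrite mxE mulrBr.
rewrite sumrB; congr (_ - _);
  by under eq_bigr do rewrite mulr_natr mulrb eq_sym; rewrite -big_mkcond big_pred1_eq.
Qed.

Section FlowBound.
Variables (R : realFieldType) (n m : nat) (hd tl : 'I_m -> 'I_n).
Variables (y : 'I_m -> R) (u : 'rV[R]_m).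
Hypothesis y_gt0 : forall f, 0 < y f.

Definition ypair (c : 'rV[int]_m) : R := \sum_f y f * u 0 f * (c 0 f)%:~R.

Hypothesis ypair_cycle : forall c, c *m bdmx int hd tl = 0 -> ypair c = 0.

Definition forward : rel 'I_n := fun a b => [exists f,
  ((tl f == a) && (hd f == b) && (0 < u 0 f))
  || ((hd f == a) && (tl f == b) && (u 0 f < 0))].

Lemma ypairD c c' : ypair (c + c') = ypair c + ypair c'.
Proof.
by rewrite /ypair -big_split; apply: eq_bigr => f _; rewrite mxE intrD mulrDr.
Qed.

Lemma ypairN c : ypair (- c) = - ypair c.
Proof. by rewrite /ypair -sumrN; apply: eq_bigr => f _; rewrite mxE intrN mulrN. Qed.

Lemma ypair_delta f : ypair (delta_mx 0 f) = y f * u 0 f.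
Proof.
rewrite /ypair (bigD1 f) //= big1 ?addr0; first by rewrite mxE !eqxx mulr1.
by move=> j /negPf Hj; rewrite mxE Hj andbF mulr0.
Qed.

Lemma forward_path_chain x p : path forward x p ->
  exists c, [/\ c *m bdmx int hd tl = delta_mx 0 (last x p) - delta_mx 0 x,
                0 <= ypair c & p != [::] -> 0 < ypair c].
Proof.
elim: p x => [|b p IHp] x /=.
  move=> _; exists 0; rewrite mul0mx subrr /ypair big1 // => f _.
  by rewrite mxE mulr0.
case/andP => /existsP [f Hf] /IHp [c [Hc c_ge0 _]].
case/orP: Hf => /andP[/andP[/eqP Htl /eqP Hhd] uf].
  exists (c + delta_mx 0 f).
  rewrite mulmxDl Hc bdmx_delta Htl Hhd addrA subrK ypairD ypair_delta.
  by have := mulr_gt0 (y_gt0 f) uf; split=> //; lra.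
exists (c - delta_mx 0 f).
rewrite mulmxBl Hc bdmx_delta Htl Hhd opprB addrA subrK ypairD ypairN ypair_delta.
have : 0 < y f * - u 0 f by rewrite mulr_gt0 // oppr_gt0.
by rewrite mulrN; split=> //; lra.
Qed.

Lemma forward_acyclic a b : forward a b -> ~~ connect forward b a.
Proof.
move=> ab; apply/negP => /connectP [p bp a_last].
have [|c [dc _ c_gt0]] := @forward_path_chain a (b :: p); first by rewrite /= ab.
by move: dc (c_gt0 isT); rewrite /= -a_last subrr => /ypair_cycle ->; rewrite ltxx.
Qed.

Lemma flow_into_reach_ge0 b f :
  0 <= u 0 f * ((connect forward b (hd f))%:R - (connect forward b (tl f))%:R).
Proof.
case bh: (connect forward b (hd f)); case bt: (connect forward b (tl f)) => /=.
- by rewrite subrr mulr0.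
- rewrite subr0 mulr1 leNgt; apply/negP => uf.
  have : forward (hd f) (tl f) by apply/existsP; exists f; rewrite !eqxx uf orbT.
  by move/connect1/(connect_trans bh); rewrite bt.
- rewrite sub0r mulrN1 oppr_ge0 leNgt; apply/negP => uf.
  have : forward (tl f) (hd f) by apply/existsP; exists f; rewrite !eqxx uf.
  by move/connect1/(connect_trans bt); rewrite bh.
- by rewrite subrr mulr0.
Qed.

Lemma flow_le_boundary e : `|u 0 e| <= \sum_v `|(u *m bdmx R hd tl) 0 v|.
Proof.
have cut_le b : \sum_f u 0 f * ((connect forward b (hd f))%:R
                              - (connect forward b (tl f))%:R)
                <= \sum_v `|(u *m bdmx R hd tl) 0 v|.
  rewrite -bdmx_sum_pred; apply: ler_sum => v _.
  by case: (connect _ b v); rewrite ?mul1r ?ler_norm // mul0r.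
have rest_ge0 b : 0 <= \sum_(f | f != e)
    u 0 f * ((connect forward b (hd f))%:R - (connect forward b (tl f))%:R).
  by apply: sumr_ge0 => f _; apply: flow_into_reach_ge0.
case: ltrgt0P => ue.
- have /forward_acyclic back : forward (tl e) (hd e).
    by apply/existsP; exists e; rewrite !eqxx ue.
  apply: le_trans (cut_le (hd e)); rewrite (bigD1 e) //= connect0 (negPf back) /=.
  by have := rest_ge0 (hd e); lra.
- have /forward_acyclic back : forward (hd e) (tl e).
    by apply/existsP; exists e; rewrite !eqxx ue orbT.
  apply: le_trans (cut_le (tl e)); rewrite (bigD1 e) //= connect0 (negPf back) /=.
  by have := rest_ge0 (tl e); lra.
- by apply: sumr_ge0.
Qed.

End FlowBound.

Lemma mulmx_entry_le (R : realDomainType) p q r (A : 'M[R]_(p, q))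
    (B : 'M[R]_(q, r)) a b :
  (forall i k, `|A i k| <= a) -> (forall k j, `|B k j| <= b) ->
  forall i j, `|(A *m B) i j| <= q%:R * a * b.
Proof.
move=> Aa Bb i j; rewrite mxE; apply: le_trans (ler_norm_sum _ _ _) _.
apply: le_trans (_ : _ <= \sum_(k < q) a * b) _.
  by apply: ler_sum => k _; rewrite normrM; apply: ler_pM.
by rewrite sumr_const card_ord -mulrA mulr_natl.
Qed.

Lemma entry_le_sum_norm (R : realDomainType) p q (A : 'M[R]_(p, q)) i j :
  `|A i j| <= \sum_i' \sum_j' `|A i' j'|.
Proof.
rewrite (bigD1 i) //= (bigD1 j) //= -addrA lerDl addr_ge0 //.
  by apply: sumr_ge0.
by apply: sumr_ge0 => *; apply: sumr_ge0.
Qed.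

Lemma row_mulmx_le (R : realDomainType) k l (z : 'rV[R]_k) (P : 'M[R]_(k, l)) a :
  (forall e i, `|P e i| <= a) -> forall i j, `|(z *m P) i j| <= (\sum_e `|z 0 e|) * a.
Proof.
move=> Pa i j; rewrite (ord1 i) mxE big_distrl /=.
apply: le_trans (ler_norm_sum _ _ _) _; apply: ler_sum => e _.
by rewrite normrM ler_wpM2l.
Qed.

Lemma quad_form_diag (R : comNzRingType) k (z : 'rV[R]_k) d :
  (z *m diag_mx d *m z^T) 0 0 = \sum_e d 0 e * z 0 e ^+ 2.
Proof. by rewrite mul_mx_diag mxE; apply: eq_bigr => e _; rewrite !mxE; ring. Qed.

Lemma quad_form_le (R : realDomainType) k (z : 'rV[R]_k) (A : 'M[R]_k) C :
  (forall i j, `|A i j| <= C) ->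
  `|(z *m A *m z^T) 0 0| <= C * (\sum_e `|z 0 e|) ^+ 2.
Proof.
move=> AC; have -> : (z *m A *m z^T) 0 0 = \sum_j \sum_i z 0 i * A i j * z 0 j.
  by rewrite mxE; apply: eq_bigr => j _; rewrite !mxE big_distrl.
rewrite expr2 big_distrlr /= big_distrr /= exchange_big /=.
apply: le_trans (ler_norm_sum _ _ _) _; apply: ler_sum => j _.
rewrite big_distrr /=; apply: le_trans (ler_norm_sum _ _ _) _.
apply: ler_sum => i _; rewrite !normrM mulrCA -mulrA [C * _]mulrC.
by rewrite ler_wpM2l // [_ * C]mulrC ler_wpM2r.
Qed.

Lemma sum_norm_sqr_le (R : realFieldType) k (z : 'rV[R]_k) :
  (\sum_e `|z 0 e|) ^+ 2 <= k%:R * \sum_e z 0 e ^+ 2.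
Proof.
set Z := \sum_e z 0 e ^+ 2.
rewrite expr2 big_distrl /=.
apply: le_trans (_ : _ <= \sum_i \sum_j (z 0 i ^+ 2 + z 0 j ^+ 2) / 2) _.
  apply: ler_sum => i _; rewrite big_distrr; apply: ler_sum => j _ /=.
  rewrite ler_pdivlMr // mulr_natr -[z 0 i ^+ 2]real_normK ?num_real //.
  rewrite -[z 0 j ^+ 2]real_normK ?num_real // -subr_ge0.
  by have := sqr_ge0 (`|z 0 i| - `|z 0 j|); rewrite sqrrB mulr2n; lra.
have -> : \sum_i \sum_j (z 0 i ^+ 2 + z 0 j ^+ 2) / 2
          = \sum_i (z 0 i ^+ 2 *+ k + Z) / 2.
  by apply: eq_bigr => i _; rewrite -big_distrl /= big_split /= sumr_const card_ord.
rewrite -big_distrl /= big_split /= sumr_const card_ord sumrMnl -/Z.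
by rewrite -mulr2n -[Z *+ k *+ 2]mulr_natr mulfK ?pnatr_eq0 // mulr_natl.
Qed.

Lemma sum_norm_le_of_sqr (R : realFieldType) k (z : 'rV[R]_k) a : 0 <= a ->
  \sum_e z 0 e ^+ 2 <= a * \sum_e `|z 0 e| -> \sum_e `|z 0 e| <= k%:R * a.
Proof.
set S := \sum_e `|z 0 e| => a_ge0 Za.
have S_ge0 : 0 <= S by apply: sumr_ge0.
have : S * S <= k%:R * a * S.
  rewrite -expr2 -mulrA; apply: le_trans (sum_norm_sqr_le z) _.
  by rewrite ler_wpM2l.
rewrite le0r in S_ge0; case/orP: S_ge0 => [/eqP->|S_gt0]; first by rewrite mulr_ge0.
by rewrite ler_pM2r.
Qed.

Lemma quad_form_coercive (R : realFieldType) k (z : 'rV[R]_k) (d : 'rV[R]_k)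
    (A : 'M[R]_k) C :
  0 <= C -> (forall i j, `|A i j| <= C) -> (forall e, C * k%:R + 1 <= d 0 e) ->
  \sum_e z 0 e ^+ 2 <= (z *m (diag_mx d + A) *m z^T) 0 0.
Proof.
move=> C_ge0 AC dC; rewrite mulmxDr mulmxDl mxE quad_form_diag.
have := quad_form_le z AC; have := ler_wpM2l C_ge0 (sum_norm_sqr_le z).
have : (C * k%:R + 1) * \sum_e z 0 e ^+ 2 <= \sum_e d 0 e * z 0 e ^+ 2.
  by rewrite big_distrr /=; apply: ler_sum => e _; rewrite ler_wpM2r ?sqr_ge0.
have := ler_norm (- (z *m A *m z^T) 0 0); rewrite normrN; lra.
Qed.

Lemma row_free_of_gram_unit (F : fieldType) h m (M : 'M[F]_(h, m)) (X : 'M[F]_m) :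
  M *m X *m M^T \in unitmx -> row_free M.
Proof.
move/mxrank_unit => rkG; rewrite -row_leq_rank -{1}rkG.
by apply: leq_trans (mxrankM_maxl _ _) (mxrankM_maxl _ _).
Qed.

Lemma gram_diag_unit (R : realFieldType) h m (M : 'M[R]_(h, m)) (d : 'rV[R]_m) :
  row_free M -> (forall e, 0 < d 0 e) -> M *m diag_mx d *m M^T \in unitmx.
Proof.
move=> freeM d_gt0; rewrite -row_free_unit; apply: inj_row_free => r rG.
have : ((r *m M) *m diag_mx d *m (r *m M)^T) 0 0 = 0.
  have -> : r *m M *m diag_mx d *m (r *m M)^T = r *m (M *m diag_mx d *m M^T) *m r^T.
    by rewrite trmx_mul !mulmxA.
  by rewrite rG mul0mx mxE.
rewrite quad_form_diag => /psumr_eq0P rM0.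
apply/eqP; rewrite -(mulmx_free_eq0 _ freeM); apply/eqP/rowP => e.
have /eqP := rM0 (fun f _ => mulr_ge0 (ltW (d_gt0 f)) (sqr_ge0 _)) e isT.
by rewrite mulf_eq0 gt_eqF //= sqrf_eq0 => /eqP ->; rewrite mxE.
Qed.

Section GramInverseBound.
Variables (R : realFieldType) (h m : nat) (M : 'M[R]_(h, m)) (P : 'M[R]_(m, h)).
Hypothesis MP : M *m P = 1%:M.

Let Pnorm := \sum_i \sum_j `|P i j|.
Let Mnorm := \sum_i \sum_j `|M i j|.

Lemma inv_gram_le C (d : 'rV[R]_m) (A : 'M[R]_m) (b : 'rV[R]_h) b0 :
  0 <= C -> (forall i j, `|A i j| <= C) -> (forall e, C * m%:R + 1 <= d 0 e) ->
  M *m (diag_mx d + A) *m M^T \in unitmx ->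
  0 <= b0 -> (forall i j, `|b i j| <= b0) ->
  forall i j, `|(b *m invmx (M *m (diag_mx d + A) *m M^T)) i j|
              <= Pnorm * (m%:R * (h%:R * b0 * Pnorm)).
Proof.
move=> C_ge0 AC dC unitG b0_ge0 bb; set G := M *m _ *m M^T.
set r := b *m invmx G; set z := r *m M; set S := \sum_e `|z 0 e|.
have rz : r = z *m P by rewrite /z -mulmxA MP mulmx1.
have Pnorm_ge0 : 0 <= Pnorm by apply: sumr_ge0 => *; apply: sumr_ge0.
have k_ge0 : 0 <= h%:R * b0 * Pnorm by rewrite !mulr_ge0.
have rS i j : `|r i j| <= S * Pnorm.
  by rewrite rz; apply: (@row_mulmx_le _ _ _ z P Pnorm (entry_le_sum_norm P)).
have rTS i j : `|r^T i j| <= S * Pnorm by rewrite mxE.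
have Zle : \sum_e z 0 e ^+ 2 <= h%:R * b0 * Pnorm * S.
  apply: le_trans (quad_form_coercive z C_ge0 AC dC) _.
  have -> : z *m (diag_mx d + A) *m z^T = b *m r^T.
    by rewrite -[b](mulmxKV unitG) -/r /G /z trmx_mul !mulmxA.
  apply: le_trans (ler_norm _) _; apply: le_trans (mulmx_entry_le bb rTS 0 0) _.
  by rewrite [S * Pnorm]mulrC !mulrA.
move=> i j; apply: le_trans (rS i j) _; rewrite mulrC ler_wpM2l //.
exact: sum_norm_le_of_sqr.
Qed.

Lemma schur_correction_bounded C K : 0 <= C -> 0 <= K -> exists T, 0 < T /\
  forall (d : 'rV[R]_m) (A : 'M[R]_m) (u : 'rV[R]_m),
    (forall i j, `|A i j| <= C) -> (forall e, C * m%:R + 1 <= d 0 e) ->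
    (forall e, `|u 0 e| <= K) -> M *m (diag_mx d + A) *m M^T \in unitmx ->
    `|(u *m A *m u^T - u *m A *m M^T *m invmx (M *m (diag_mx d + A) *m M^T)
                    *m (M *m A *m u^T)) 0 0| <= T.
Proof.
move=> C_ge0 K_ge0.
have Mnorm_ge0 : 0 <= Mnorm by apply: sumr_ge0 => *; apply: sumr_ge0.
have Pnorm_ge0 : 0 <= Pnorm by apply: sumr_ge0 => *; apply: sumr_ge0.
pose T1 := m%:R * (m%:R * K * C) * K.
pose b0 := m%:R * (m%:R * K * C) * Mnorm.
pose a0 := m%:R * (m%:R * Mnorm * C) * K.
pose T2 := h%:R * (Pnorm * (m%:R * (h%:R * b0 * Pnorm))) * a0.
have b0_ge0 : 0 <= b0 by rewrite !mulr_ge0.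
have [T1_ge0 T2_ge0] : 0 <= T1 /\ 0 <= T2 by split; rewrite !mulr_ge0.
exists (T1 + T2 + 1); split=> [|d A u AC dC uK unitG]; first lra.
have uK' i e : `|u i e| <= K by rewrite (ord1 i).
have uTK e j : `|u^T e j| <= K by rewrite mxE (ord1 j).
have MMnorm i j : `|M i j| <= Mnorm := entry_le_sum_norm M i j.
have MTMnorm i j : `|M^T i j| <= Mnorm by rewrite mxE.
have uAM := mulmx_entry_le (mulmx_entry_le uK' AC) MTMnorm.
have MAu := mulmx_entry_le (mulmx_entry_le MMnorm AC) uTK.
set x := u *m A *m u^T; set y := _ *m (M *m A *m u^T).
have x_le : `|x 0 0| <= T1 := mulmx_entry_le (mulmx_entry_le uK' AC) uTK 0 0.
have y_le : `|y 0 0| <= T2 :=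
  mulmx_entry_le (inv_gram_le C_ge0 AC dC unitG b0_ge0 uAM) MAu 0 0.
have -> : (x - y) 0 0 = x 0 0 - y 0 0 by rewrite !mxE.
by apply: le_trans (ler_normB _ _) _; lra.
Qed.

End GramInverseBound.

Lemma bdmx_map (R : nzRingType) n m (hd tl : 'I_m -> 'I_n) :
  bdmx R hd tl = map_mx (fun z : int => z%:~R) (bdmx int hd tl).
Proof. by apply/matrixP => i j; rewrite !mxE intrB !natz. Qed.

Lemma cycmx_bdmx (R : nzRingType) n m h (hd tl : 'I_m -> 'I_n) (g : 'M[int]_(h, m)) :
  g *m bdmx int hd tl = 0 -> cycmx R g *m bdmx R hd tl = 0.
Proof. by move=> gB; rewrite bdmx_map /cycmx -map_mxM gB map_mx0. Qed.

Lemma cycle_orth_flow_le (R : realFieldType) n m h (hd tl : 'I_m -> 'I_n)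
    (g : 'M[int]_(h, m)) (d u : 'rV[R]_m) :
  is_H1_Zbasis hd tl g -> (forall e, 0 < d 0 e) ->
  u *m diag_mx d *m (cycmx R g)^T = 0 ->
  forall e, `|u 0 e| <= \sum_v `|(u *m bdmx R hd tl) 0 v|.
Proof.
move=> [_ Hg] d_gt0 uDM; apply: (flow_le_boundary (y := d 0)) => // c.
case/Hg => k [-> _].
have -> : ypair (d 0) u (k *m g)
          = (u *m diag_mx d *m (map_mx (fun z : int => z%:~R) (k *m g))^T) 0 0.
  rewrite /ypair mxE; apply: eq_bigr => f _.
  by rewrite mul_mx_diag !mxE [d 0 f * _]mulrC.
by rewrite map_mxM trmx_mul mulmxA uDM mul0mx mxE.
Qed.

Theorem theorem1p1 (R : realType) (n m : nat) (hd tl : 'I_m -> 'I_n)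
  (Hconn : connected_graph hd tl)
  (g : 'M[int]_((m + 1 - n)%N, m)) (Hg : is_H1_Zbasis hd tl g)
  (p : 'rV[R]_n) (Hp0 : p != 0) (Hpsum : \sum_(v < n) p 0 v = 0)
  (w : 'rV[R]_m) (Hw : w *m bdmx R hd tl = p)
  (U : topologicalType) (y : 'I_m -> U -> R)
  (Hycont : forall i, continuous (y i)) (Hypos : forall i s, 0 < y i s)
  (A : U -> 'M[R]_m)
  (HA : exists C : R, 0 < C /\ forall s i j, `|A s i j| <= C)
  (HinvM : forall s, (cycmx R g *m (Ymx y s + A s) *m (cycmx R g)^T) \in unitmx)
  (HinvN : forall s, (Nmx g w *m (Ymx y s + A s) *m (Nmx g w)^T) \in unitmx) :
  exists c C' : R, 0 < c /\ 0 < C' /\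
    forall s : U, (forall i, C' <= y i s) ->
      `| \det (Nmx g w *m (Ymx y s + A s) *m (Nmx g w)^T)
           / \det (cycmx R g *m (Ymx y s + A s) *m (cycmx R g)^T)
         - \det (Nmx g w *m Ymx y s *m (Nmx g w)^T)
           / \det (cycmx R g *m Ymx y s *m (cycmx R g)^T) | <= c * 1.
Proof.
have [[s0 _]|U0] := pselect (exists s : U, True); last first.
  by exists 1, 1; do 2!split=> //; move=> s; case: U0; exists s.
rewrite /Nmx; set M := cycmx R g.
have freeM : row_free M := row_free_of_gram_unit (HinvM s0).
have [C [C_gt0 AC]] := HA.
have /row_freeP [P MP] := freeM.
have [|T [T_gt0 HT]] := schur_correction_bounded MP (ltW C_gt0) (K := \sum_v `|p 0 v|).
  by apply: sumr_ge0.
exists T, (C * m%:R + 1); do 2!split=> //.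
  by have := mulr_ge0 (ltW C_gt0) (ler0n R m); lra.
move=> s ys; rewrite mulr1.
have d_gt0 e : 0 < (\row_i y i s) 0 e by rewrite mxE.
have unitY := gram_diag_unit freeM d_gt0.
have [c uYM] := exists_orth_shift w unitY.
rewrite (det_ratio_sub erefl (tr_diag_mx _) uYM unitY (HinvM s)).
have uB : (w + c *m M) *m bdmx R hd tl = p.
  by rewrite mulmxDl Hw -mulmxA cycmx_bdmx ?(proj1 Hg) // mulmx0 addr0.
have u_le e : `|(w + c *m M) 0 e| <= \sum_v `|p 0 v|.
  by rewrite -uB; apply: cycle_orth_flow_le Hg d_gt0 uYM e.
have unitX := HinvM s.
by apply: HT => // e; rewrite mxE.
Qed.
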